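(* For every formula $\varphi$ of propositional linear temporal logic, $\mathrm{LTL} \models \neg \Box (\varphi\leftrightarrow\bigcirc\diamondsuit\Box\neg\varphi)$.
   Context: Propositional linear temporal logic (LTL) with the ''next'' modality $\bigcirc$, ''always'' modality $\Box$ and $\diamondsuit\varphi\equiv\neg\Box\neg\varphi$, interpreted over infinite sequences of states $\mathcal{K}=(\eta_0,\eta_1,\dots)$ with $\mathcal{K}_i(\bigcirc\varphi)=\mathcal{K}_{i+1}(\varphi)$, $\mathcal{K}_i(\Box\varphi)=\mathfrak{tt}$ iff $\mathcal{K}_j(\varphi)=\mathfrak{tt}$ for all $j\ge i$. $\mathrm{LTL}\models\varphi$ means validity in all temporal structures. Here $\bigcirc$ denotes the LTL ''next'' operator. *)

Set Implicit Arguments.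

Inductive formula (V : Type) : Type :=
| Var : V -> formula V
| Fls : formula V
| Neg : formula V -> formula V
| And : formula V -> formula V -> formula V
| Or : formula V -> formula V -> formula V
| Imp : formula V -> formula V -> formula V
| Iff : formula V -> formula V -> formula V
| Next : formula V -> formula V
| Always : formula V -> formula V.

Arguments Fls {V}.

Definition Eventually (V : Type) (f : formula V) : formula V :=
  Neg (Always (Neg f)).

(* A temporal structure: an infinite sequence of states eta_0, eta_1, ...,
   each state being a valuation of the propositional variables. *)
Definition tstruct (V : Type) := nat -> V -> bool.

Fixpoint holds (V : Type) (K : tstruct V) (i : nat) (f : formula V) : Prop :=
  match f with
  | Var v => K i v = true
  | Fls => False
  | Neg g => ~ holds K i g
  | And g h => holds K i g /\ holds K i h
  | Or g h => holds K i g \/ holds K i h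
  | Imp g h => holds K i g -> holds K i h
  | Iff g h => (holds K i g <-> holds K i h)
  | Next g => holds K (S i) g
  | Always g => forall j, i <= j -> holds K j g
  end.

Definition ltl_valid (V : Type) (f : formula V) : Prop :=
  forall (K : tstruct V) (i : nat), holds K i f.

(* Suppose [□(φ ↔ ○◇□¬φ)] holds from position [i] on.  If [□¬φ] held at some
   [k ≥ i], then [φ] fails at [k], so [◇□¬φ] fails at [k+1]; yet [□¬φ] still
   holds at [k+1].  Hence [□¬φ] fails everywhere from [i] on, so [◇□¬φ] fails
   at every [k+1 > i], so [φ] fails at every [k ≥ i], i.e. [□¬φ] holds at [i]. *)
From Stdlib Require Import Lia.

Lemma holds_always_le {V : Type} (K : tstruct V) (f : formula V) {k j : nat} :
  k <= j -> holds K k (Always f) -> holds K j (Always f).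
Proof. intros Hkj Hf m Hjm. apply Hf. lia. Qed.

Section SelfReference.

Context {V : Type} (K : tstruct V) (i : nat) (phi : formula V).

Hypothesis phi_iff_next_eventually :
  forall k, i <= k ->
  (holds K k phi <-> holds K (S k) (Eventually (Always (Neg phi)))).

Lemma not_always_neg_from (k : nat) :
  i <= k -> ~ holds K k (Always (Neg phi)).
Proof.
  intros Hik Hbox.
  assert (Hnot_phi : ~ holds K k phi) by exact (Hbox k (le_n k)).
  assert (Hnot_ev : ~ holds K (S k) (Eventually (Always (Neg phi))))
    by (rewrite <- phi_iff_next_eventually by exact Hik; exact Hnot_phi).
  apply Hnot_ev. intros Hnever.
  exact (Hnever (S k) (le_n _) (holds_always_le K _ (le_S _ _ (le_n k)) Hbox)).
Qed.

Lemma always_neg_from_start : holds K i (Always (Neg phi)).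
Proof.
  intros k Hik Hphi.
  apply (proj1 (phi_iff_next_eventually k Hik) Hphi).
  intros j Hkj. apply not_always_neg_from. lia.
Qed.

End SelfReference.

Theorem mainTheorem4 : forall (V : Type) (phi : formula V),
  ltl_valid (Neg (Always (Iff phi (Next (Eventually (Always (Neg phi))))))).
Proof.
  intros V phi K i Hself.
  exact (not_always_neg_from K i phi Hself i (le_n i)
           (always_neg_from_start K i phi Hself)).
Qed.
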